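(* Let $\lambda=2\cos(\pi/5)$ and let $H_5$ be the subgroup of $SL(2,\mathbb R)$ generated by $S=\begin{pmatrix}0&1\\-1&0\end{pmatrix}$ and $T=\begin{pmatrix}1&\lambda\\0&1\end{pmatrix}$. Suppose that $H(4)$ contains an element $\sigma$ with $\sigma\equiv\begin{pmatrix}1&4\\0&1\end{pmatrix}\pmod{8}$. Then $[H(2^n):H(2^{n+1})]=2^6$ for every integer $n\ge 2$, and $[H_5:H(2^n)]=2^{6(n-2)}[H_5:H(4)]$ for every integer $n\ge2$.
   Context: For $\alpha\in\mathbb Z[\lambda]$, $H(\alpha)=\{(a_{ij})\in H_5 : a_{11}-1,\ a_{22}-1,\ a_{12},\ a_{21}\in \alpha\mathbb Z[\lambda]\}$. Congruence of matrices modulo $8$ means entrywise congruence modulo the ideal $8\mathbb Z[\lambda]$. *)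

From HB Require Import structures.
From mathcomp Require Import all_boot all_order all_algebra.
From mathcomp Require Import reals trigo.
Set Implicit Arguments. Unset Strict Implicit. Unset Printing Implicit Defensive.
Import Order.TTheory GRing.Theory Num.Theory.
Local Open Scope ring_scope.

Section Hecke.
Variable R : realType.

Definition lam : R := 2 * cos (pi / 5%:R).

Definition in_Zlam (x : R) : Prop := exists a b : int, x = a%:~R + b%:~R * lam.

Definition in_ideal (alpha x : R) : Prop := exists y, in_Zlam y /\ x = alpha * y.

Definition Smx : 'M[R]_2 := \matrix_(i < 2, j < 2)
  (if (i == 0) && (j == 0) then 0 else if (i == 0) then 1
   else if (j == 0) then -1 else 0).
Definition Tmx : 'M[R]_2 := \matrix_(i < 2, j < 2)
  (if i == j then 1 else if (i == 0) then lam else 0).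

Inductive in_H5 : 'M[R]_2 -> Prop :=
| H5_one : in_H5 1%:M
| H5_S x : in_H5 x -> in_H5 (Smx *m x)
| H5_Si x : in_H5 x -> in_H5 (invmx Smx *m x)
| H5_T x : in_H5 x -> in_H5 (Tmx *m x)
| H5_Ti x : in_H5 x -> in_H5 (invmx Tmx *m x).

Definition H (alpha : R) (A : 'M[R]_2) : Prop :=
  [/\ in_H5 A, in_ideal alpha (A 0 0 - 1), in_ideal alpha (A 1 1 - 1),
      in_ideal alpha (A 0 1) & in_ideal alpha (A 1 0)].

Definition mx_congr (alpha : R) (A B : 'M[R]_2) : Prop :=
  forall i j, in_ideal alpha (A i j - B i j).

Definition has_index (G K : 'M[R]_2 -> Prop) (k : nat) : Prop :=
  exists r : 'I_k -> 'M[R]_2, (forall i, G (r i)) /\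
    forall g, G g -> exists! i, K (invmx (r i) *m g).

End Hecke.

From Pilot Require Import Defs.
From HB Require Import structures.
From mathcomp Require Import all_boot all_order all_algebra.
From mathcomp Require Import boolp reals trigo.
From mathcomp Require Import zify ring lra.
Import Order.TTheory GRing.Theory Num.Theory.
Local Open Scope ring_scope.
Set Implicit Arguments. Unset Strict Implicit. Unset Printing Implicit Defensive.

(* For n >= 1 every g in H(2^n) is g = 1 + 2^n X with X a matrix over Z[lam]; since
   det g = 1 the trace of X is even, so X modulo 2 is a trace-zero 2x2 matrix over
   Z[lam]/2 = F_4, and two elements of H(2^n) lie in the same coset of H(2^(n+1))
   exactly when their X agree modulo 2.  Hence [H(2^n) : H(2^(n+1))] counts the classes
   attained, at most 4^3 = 2^6.  All of them are attained: at level 4 the attained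
   classes are closed under addition, as (1 + 4X)(1 + 4Y) = 1 + 4(X + Y) mod 8, and
   under conjugation by H_5; sigma and T^4 give the classes of e12 and lam e12, and
   conjugation by S and T then yields everything.  Squaring 1 + 2^n X gives
   1 + 2^(n+1) X modulo 2^(n+2) when n >= 2, which transports all classes to the next
   level.  The second claim follows by multiplicativity of indices along
   H_5 > H(4) > H(8) > ... > H(2^n). *)

Lemma int_parity (a : int) : exists a', a = 2 * a' \/ a = 2 * a' + 1.
Proof.
exists (a %/ 2)%Z; have := divz_eq a 2; have := modz_ge0 a (isT : (2 : int) != 0).
by have := ltz_pmod a (isT : (0 : int) < 2); lia.
Qed.

Lemma golden_form_eq0 (a b : int) : a * a + a * b - b * b = 0 -> b = 0.
Proof.
(* Infinite descent: the form is odd unless [a] and [b] are both even. *)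
suff descent n : forall a b : int, (`|b| <= n)%N -> a * a + a * b - b * b = 0 -> b = 0.
  exact: (descent `|b|%N).
elim: n => [|n IH] {}a {}b hb e; first by lia.
have [a' [] ha] := int_parity a; have [b' [] hb'] := int_parity b; subst a b; try nia.
by rewrite (IH a' b'); nia.
Qed.

Section Lambda.
Variable R : realType.
Local Notation lam := (lam R).

Lemma lam_sqr : lam ^+ 2 = lam + 1.
Proof.
set c := cos (pi / 5%:R : R).
have pi_gt0 := @pi_gt0 R.
have cos_pos x : - (pi / 2%:R) < x < pi / 2%:R -> 0 < cos x by exact: cos_gt0_pihalf.
have c_gt0 : 0 < c by apply: cos_pos; apply/andP; split; lra.
have cos2 : cos (pi / 5%:R *+ 2) = 2 * c ^+ 2 - 1 :> R.
  by rewrite cos_mulr2n -mulr_natl.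
have cos2_gt0 : 0 < 2 * c ^+ 2 - 1.
  by rewrite -cos2; apply: cos_pos; rewrite -mulr_natr; apply/andP; split; lra.
(* [cos (4 pi / 5) = - cos (pi / 5)] makes [c] a root of
   [(c + 1) (2 c - 1) (4 c^2 - 2 c - 1)]. *)
have cos4 : cos (pi / 5%:R *+ 2 *+ 2) = - c :> R.
  have -> : pi / 5%:R *+ 2 *+ 2 = - (pi / 5%:R) + pi :> R.
    by rewrite -mulrnA -mulr_natr; field.
  by rewrite cosDpi cosN.
rewrite cos_mulr2n cos2 in cos4.
have : (c + 1) * (2 * c - 1) * (4 * c ^+ 2 - 2 * c - 1) = 0.
  by rewrite -[RHS](subrr c) -[in RHS]cos4; ring.
move/eqP; rewrite !mulf_eq0 -!orbA => /or3P[] /eqP root; try nra.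
by rewrite /Defs.lam -/c; nra.
Qed.

Lemma lam_coord_eq0 (a b : int) : a%:~R + b%:~R * lam = 0 -> a = 0 /\ b = 0.
Proof.
move=> e.
have norm_eq0 : ((a * a + a * b - b * b)%:~R : R) = 0.
  rewrite !(rmorphB, rmorphD, rmorphM) /=.
  transitivity ((a%:~R + b%:~R * lam) * (a%:~R + b%:~R - b%:~R * lam) : R).
    have l2 := lam_sqr; ring: l2.
  by rewrite e mul0r.
have b0 : b = 0 by apply: (golden_form_eq0 (a := a)); move/eqP: norm_eq0; rewrite intr_eq0 => /eqP.
by move: e; rewrite b0 mul0r addr0 => /eqP; rewrite intr_eq0 => /eqP.
Qed.

Definition Zlam : {pred R} := fun x => `[< in_Zlam x >].

Lemma ZlamP x : reflect (in_Zlam x) (x \in Zlam).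
Proof. exact: asboolP. Qed.

Lemma Zlam_lam : lam \in Zlam.
Proof. by apply/ZlamP; exists 0, 1; rewrite mul1r add0r. Qed.

Lemma Zlam_subring_closed : subring_closed Zlam.
Proof.
split.
- by apply/ZlamP; exists 1, 0; rewrite mul0r addr0.
- move=> _ _ /ZlamP[a [b ->]] /ZlamP[c [d ->]]; apply/ZlamP.
  by exists (a - c), (b - d); rewrite !rmorphB /=; ring.
- move=> _ _ /ZlamP[a [b ->]] /ZlamP[c [d ->]]; apply/ZlamP.
  exists (a * c + b * d), (a * d + b * c + b * d); rewrite !(rmorphD, rmorphM) /=.
  have l2 := lam_sqr; ring: l2.
Qed.

HB.instance Definition _ := GRing.isSubringClosed.Build R Zlam Zlam_subring_closed.

Definition ideal (m : R) : {pred R} := fun x => `[< in_ideal m x >].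

Lemma in_idealP m x : reflect (in_ideal m x) (x \in ideal m).
Proof. exact: asboolP. Qed.

Lemma idealP m x : reflect (exists2 y, y \in Zlam & x = m * y) (x \in ideal m).
Proof.
by apply: (iffP (asboolP (in_ideal m x))) => [[y [/ZlamP]]|[y /ZlamP]]; exists y.
Qed.

Lemma ideal_zmod_closed m : zmod_closed (ideal m).
Proof.
split; first by apply/idealP; exists 0; rewrite ?mulr0 ?rpred0.
move=> _ _ /idealP[x hx ->] /idealP[y hy ->]; apply/idealP.
by exists (x - y); rewrite ?mulrBr ?rpredB.
Qed.

HB.instance Definition _ m := GRing.isZmodClosed.Build R (ideal m) (ideal_zmod_closed m).

Lemma ideal_gen m x : x \in Zlam -> m * x \in ideal m.
Proof. by move=> hx; apply/idealP; exists x. Qed.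

Lemma ideal_mull m x y : x \in Zlam -> y \in ideal m -> x * y \in ideal m.
Proof.
by move=> hx /idealP[z hz ->]; rewrite mulrCA; apply/ideal_gen/rpredM.
Qed.

Lemma ideal_mulr m x y : x \in ideal m -> y \in Zlam -> x * y \in ideal m.
Proof. by move=> hx hy; rewrite mulrC; apply: ideal_mull. Qed.

Lemma ideal_Zlam m x : m \in Zlam -> x \in ideal m -> x \in Zlam.
Proof. by move=> hm /idealP[y hy ->]; apply: rpredM. Qed.

Lemma ideal_mulS m k x : k \in Zlam -> x \in ideal (m * k) -> x \in ideal m.
Proof. by move=> hk /idealP[y hy ->]; rewrite -mulrA; apply/ideal_gen/rpredM. Qed.

Lemma ideal_mul2l m k x : m != 0 -> (m * x \in ideal (m * k)) -> x \in ideal k.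
Proof.
move=> m0 /idealP[y hy]; rewrite -mulrA => /(mulfI m0) ->.
exact: ideal_gen.
Qed.

(* [a + b lam] with [a, b] in [{0, 1}] represents the four elements of [Z[lam]/2]. *)
Definition res2 := (bool * bool)%type.

Definition res2R (e : res2) : R := e.1%:R + e.2%:R * lam.

Lemma Zlam_res2R e : res2R e \in Zlam.
Proof.
by rewrite /res2R; apply: rpredD; [|apply: rpredM]; rewrite ?rpred_nat ?Zlam_lam.
Qed.

Lemma res2R_inj e e' : res2R e - res2R e' \in ideal 2 -> e = e'.
Proof.
move=> /idealP[_ /ZlamP[a [b ->]]] h.
have /lam_coord_eq0[] : ((e.1 : int) - (e'.1 : int) - 2 * a)%:~R
    + ((e.2 : int) - (e'.2 : int) - 2 * b)%:~R * lam = 0 :> R.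
  transitivity (res2R e - res2R e' - 2 * (a%:~R + b%:~R * lam)); last by rewrite h subrr.
  by rewrite /res2R !(rmorphB, rmorphM) /= -!pmulrn; ring.
by case: e e' h => [[] []] [[] []] _ //=; lia.
Qed.

Lemma res2R_exists x : x \in Zlam -> exists e, x - res2R e \in ideal 2.
Proof.
move=> /ZlamP[a [b ->]].
have [a' ha] := int_parity a; have [b' hb] := int_parity b.
have hq : a'%:~R + b'%:~R * lam \in Zlam by apply/ZlamP; exists a', b'.
case: ha hb => -> [] ->;
  [exists (false, false) | exists (false, true) | exists (true, false) | exists (true, true)];
  apply/idealP; exists (a'%:~R + b'%:~R * lam) => //;
  rewrite /res2R /= !(rmorphD, rmorphM) /=; ring.
Qed.

End Lambda.

Arguments ideal {R}.
Arguments res2R {R}.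

Ltac Zlam_tac := repeat first [ assumption | apply: Zlam_lam | apply: Zlam_res2R
  | apply: rpred0 | apply: rpred1 | apply: rpred_nat | apply: rpred_int
  | apply: rpredB | apply: rpredD | rewrite rpredN | apply: rpredM | apply: rpredX ].

Lemma invmxM (T : comUnitRingType) n (A B : 'M[T]_n) :
  A \in unitmx -> B \in unitmx -> invmx (A *m B) = invmx B *m invmx A.
Proof.
move=> uA uB; have e : A *m B *m (invmx B *m invmx A) = 1%:M.
  by rewrite mulmxA mulmxK // mulmxV.
by rewrite -[LHS]mulmx1 -e mulmxA mulVmx ?mul1mx // unitmx_mul uA uB.
Qed.

Lemma mulmx_1addZ (T : comPzRingType) n a b (A B : 'M[T]_n) :
  (1%:M + a *: A) *m (1%:M + b *: B) = 1%:M + (a *: A + b *: B) + (a * b) *: (A *m B).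
Proof.
rewrite mulmxDl !mulmxDr !mul1mx !mulmx1 -scalemxAl -scalemxAr scalerA.
by rewrite !addrA (addrAC 1%:M).
Qed.

Lemma subr_1addZ (T : pzRingType) n a (A B : 'M[T]_n) :
  (1%:M + a *: A) - (1%:M + a *: B) = a *: (A - B).
Proof. by rewrite opprD addrACA subrr add0r scalerBr. Qed.

Section Mx2.
Variable T : comUnitRingType.
Implicit Types a b c d : T.

Definition mx2 a b c d : 'M[T]_2 :=
  \matrix_(i, j) if i == 0 then (if j == 0 then a else b) else (if j == 0 then c else d).

Lemma ord2P (i : 'I_2) : i = 0 \/ i = 1.
Proof. by case: i => [[|[|k]] hk] //; [left|right]; apply: val_inj. Qed.

Lemma mx2_eta (A : 'M[T]_2) : A = mx2 (A 0 0) (A 0 1) (A 1 0) (A 1 1).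
Proof. by apply/matrixP => i j; rewrite mxE; case: (ord2P i) => ->; case: (ord2P j) => ->. Qed.

Lemma mxOver_mx2 (S : {pred T}) a b c d :
  (mx2 a b c d \is a mxOver S) = [&& a \in S, b \in S, c \in S & d \in S].
Proof.
apply/mxOverP/and4P => [h|[ha hb hc hd] i j]; last first.
  by rewrite mxE; case: (ord2P i) => ->; case: (ord2P j) => ->.
by have := h 0 0; have := h 0 1; have := h 1 0; have := h 1 1; rewrite !mxE.
Qed.

Lemma mx2_mul a b c d a' b' c' d' : mx2 a b c d *m mx2 a' b' c' d' =
  mx2 (a * a' + b * c') (a * b' + b * d') (c * a' + d * c') (c * b' + d * d').
Proof.
apply/matrixP => i j; rewrite !mxE !big_ord_recl big_ord0 !mxE /=.
by case: (ord2P i) => ->; case: (ord2P j) => ->; rewrite /= addr0.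
Qed.

Lemma mx2_add a b c d a' b' c' d' :
  mx2 a b c d + mx2 a' b' c' d' = mx2 (a + a') (b + b') (c + c') (d + d').
Proof. by apply/matrixP => i j; rewrite !mxE; case: (ord2P i) => ->; case: (ord2P j) => ->. Qed.

Lemma mx2_opp a b c d : - mx2 a b c d = mx2 (- a) (- b) (- c) (- d).
Proof. by apply/matrixP => i j; rewrite !mxE; case: (ord2P i) => ->; case: (ord2P j) => ->. Qed.

Lemma mx2_sub a b c d a' b' c' d' :
  mx2 a b c d - mx2 a' b' c' d' = mx2 (a - a') (b - b') (c - c') (d - d').
Proof. by rewrite mx2_opp mx2_add. Qed.

Lemma mx2_scale k a b c d : k *: mx2 a b c d = mx2 (k * a) (k * b) (k * c) (k * d).
Proof. by apply/matrixP => i j; rewrite !mxE; case: (ord2P i) => ->; case: (ord2P j) => ->. Qed.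

Lemma mx2_one : 1%:M = mx2 1 0 0 1 :> 'M[T]_2.
Proof. by apply/matrixP => i j; rewrite !mxE; case: (ord2P i) => ->; case: (ord2P j) => ->. Qed.

Lemma det_mx2 a b c d : \det (mx2 a b c d) = a * d - b * c.
Proof.
rewrite (expand_det_row _ 0) !big_ord_recl big_ord0 /cofactor !det_mx11 !mxE /=.
by rewrite /bump /= expr0 expr1; ring.
Qed.

Lemma trace_mx2 (A : 'M[T]_2) : \tr A = A 0 0 + A 1 1.
Proof. by rewrite /mxtrace !big_ord_recl big_ord0 addr0; congr (A _ _ + A _ _); apply: val_inj. Qed.

Lemma det_mx2_1addZ q (A : 'M[T]_2) :
  \det (1%:M + q *: A) = 1 + q * \tr A + q ^+ 2 * \det A.
Proof. by rewrite [A]mx2_eta mx2_one mx2_scale mx2_add !det_mx2 trace_mx2 !mxE /=; ring. Qed.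

Lemma invmx_mx2 a b c d : a * d - b * c = 1 -> invmx (mx2 a b c d) = mx2 d (- b) (- c) a.
Proof.
move=> det1; have e : mx2 a b c d *m mx2 d (- b) (- c) a = 1%:M.
  by rewrite mx2_mul mx2_one; congr mx2; rewrite -?det1; ring.
have [unitA _] := mulmx1_unit e.
by rewrite -[invmx _]mulmx1 -e mulmxA mulVmx // mul1mx.
Qed.

End Mx2.

Section IdealMx.
Variable R : realType.
Local Notation Zlam := (@Zlam R).
Implicit Types m k : R.

Lemma mxOver_ideal_mull m p q r (A : 'M[R]_(p, q)) (B : 'M[R]_(q, r)) :
  A \is a mxOver Zlam -> B \is a mxOver (ideal m) -> A *m B \is a mxOver (ideal m).
Proof.
move=> /mxOverP hA /mxOverP hB; apply/mxOverP => i j.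
by rewrite mxE rpred_sum // => k _; apply: ideal_mull.
Qed.

Lemma mxOver_ideal_mulr m p q r (A : 'M[R]_(p, q)) (B : 'M[R]_(q, r)) :
  A \is a mxOver (ideal m) -> B \is a mxOver Zlam -> A *m B \is a mxOver (ideal m).
Proof.
move=> /mxOverP hA /mxOverP hB; apply/mxOverP => i j.
by rewrite mxE rpred_sum // => k _; apply: ideal_mulr.
Qed.

Lemma mxOver_ideal_scale m p q (A : 'M[R]_(p, q)) :
  A \is a mxOver Zlam -> m *: A \is a mxOver (ideal m).
Proof. by move=> /mxOverP hA; apply/mxOverP => i j; rewrite mxE ideal_gen. Qed.

Lemma mxOver_idealS m k p q (A : 'M[R]_(p, q)) :
  k \in Zlam -> A \is a mxOver (ideal (m * k)) -> A \is a mxOver (ideal m).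
Proof. by move=> hk; apply: mxOverS => x; apply: ideal_mulS. Qed.

Lemma mxOver_ideal_Zlam m p q (A : 'M[R]_(p, q)) :
  m \in Zlam -> A \is a mxOver (ideal m) -> A \is a mxOver Zlam.
Proof. by move=> hm; apply: mxOverS => x; apply: ideal_Zlam. Qed.

Lemma mxOver_ideal_trans m p q (B A C : 'M[R]_(p, q)) :
  A - B \is a mxOver (ideal m) -> B - C \is a mxOver (ideal m) -> A - C \is a mxOver (ideal m).
Proof. by move=> hAB hBC; rewrite -(subrKA B) rpredD. Qed.

Lemma mxOver_ideal_congrM m p q r (A B : 'M[R]_(p, q)) (C D : 'M[R]_(q, r)) :
  B \is a mxOver Zlam -> C \is a mxOver Zlam ->
  A - B \is a mxOver (ideal m) -> C - D \is a mxOver (ideal m) ->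
  A *m C - B *m D \is a mxOver (ideal m).
Proof.
move=> hB hC hAB hCD.
have -> : A *m C - B *m D = (A - B) *m C + B *m (C - D).
  by rewrite mulmxBl mulmxBr addrA subrK.
by rewrite rpredD ?(mxOver_ideal_mulr hAB hC) ?(mxOver_ideal_mull hB hCD).
Qed.

Lemma mxOver_idealP m p q (A : 'M[R]_(p, q)) : m != 0 ->
  reflect (exists2 X, X \is a mxOver Zlam & A = m *: X) (A \is a mxOver (ideal m)).
Proof.
move=> m0; apply: (iffP idP) => [/mxOverP hA|[X hX ->]]; last exact: mxOver_ideal_scale.
exists (m^-1 *: A); last by rewrite scalerA divff // scale1r.
apply/mxOverP => i j; rewrite mxE; have /idealP[y hy ->] := hA i j.
by rewrite mulKf.
Qed.

Lemma mxOver_ideal_scalel m k p q (A : 'M[R]_(p, q)) :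
  A \is a mxOver (ideal k) -> m *: A \is a mxOver (ideal (m * k)).
Proof.
move=> /mxOverP hA; apply/mxOverP => i j; rewrite mxE.
by have /idealP[y hy ->] := hA i j; rewrite mulrA ideal_gen.
Qed.

Lemma mxOver_ideal_scaleK m k p q (A : 'M[R]_(p, q)) : m != 0 ->
  m *: A \is a mxOver (ideal (m * k)) -> A \is a mxOver (ideal k).
Proof.
move=> m0 /mxOverP hA; apply/mxOverP => i j.
by apply: (ideal_mul2l m0); have := hA i j; rewrite mxE.
Qed.

End IdealMx.

Section HeckeGroup.
Variable R : realType.
Local Notation lam := (lam R).
Local Notation Zlam := (@Zlam R).
Local Notation in_H5 := (@in_H5 R).
Implicit Types (m : R) (A B X g r : 'M[R]_2).

Lemma Smx_mx2 : Smx R = mx2 0 1 (-1) 0.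
Proof. by apply/matrixP => i j; rewrite !mxE; case: (ord2P i) => ->; case: (ord2P j) => ->. Qed.

Lemma Tmx_mx2 : Tmx R = mx2 1 lam 0 1.
Proof. by apply/matrixP => i j; rewrite !mxE; case: (ord2P i) => ->; case: (ord2P j) => ->. Qed.

Lemma invmx_Smx : invmx (Smx R) = mx2 0 (-1) 1 0.
Proof. by rewrite Smx_mx2 invmx_mx2; [congr mx2; ring | ring]. Qed.

Lemma invmx_Tmx : invmx (Tmx R) = mx2 1 (- lam) 0 1.
Proof. by rewrite Tmx_mx2 invmx_mx2; [congr mx2; ring | ring]. Qed.

Definition H5_gens : seq 'M[R]_2 := [:: Smx R; invmx (Smx R); Tmx R; invmx (Tmx R)].

Lemma in_H5_genM X A : X \in H5_gens -> in_H5 A -> in_H5 (X *m A).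
Proof. by rewrite !inE => /or4P[] /eqP -> hA; constructor. Qed.

Lemma in_H5_gen X : X \in H5_gens -> in_H5 X.
Proof. by move=> hX; rewrite -(mulmx1 X); apply: in_H5_genM => //; constructor. Qed.

Lemma in_H5_Smx : in_H5 (Smx R).
Proof. by apply: in_H5_gen; rewrite mem_head. Qed.

Lemma in_H5_Tmx : in_H5 (Tmx R).
Proof. by apply: in_H5_gen; rewrite !inE eqxx ?orbT. Qed.

Lemma in_H5_gen_ind (P : 'M[R]_2 -> Prop) : P 1%:M ->
  (forall X A : 'M[R]_2, X \in H5_gens -> in_H5 A -> P A -> P (X *m A)) ->
  forall A, in_H5 A -> P A.
Proof. by move=> P1 PM A; elim=> // x hx Px; apply: PM => //; rewrite !inE eqxx ?orbT. Qed.

Lemma in_H5M A B : in_H5 A -> in_H5 B -> in_H5 (A *m B).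
Proof.
move=> hA hB; elim/in_H5_gen_ind: A / hA => [|X A hX _ IH]; first by rewrite mul1mx.
by rewrite -mulmxA; apply: in_H5_genM.
Qed.

Lemma H5_gens_Zlam X : X \in H5_gens -> X \is a mxOver Zlam.
Proof.
rewrite !inE => /or4P[] /eqP ->; rewrite ?invmx_Smx ?invmx_Tmx ?Smx_mx2 ?Tmx_mx2 mxOver_mx2.
all: by apply/and4P; split; Zlam_tac.
Qed.

Lemma in_H5_Zlam A : in_H5 A -> A \is a mxOver Zlam.
Proof.
elim/in_H5_gen_ind => [|X x hX _ IH].
  by apply: mxOver_scalar; [exact: rpred0 | exact: rpred1].
exact: mxOverM (H5_gens_Zlam hX) IH.
Qed.

Lemma H5_gens_det X : X \in H5_gens -> \det X = 1.
Proof.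
have detS : \det (Smx R) = 1 by rewrite Smx_mx2 det_mx2; ring.
have detT : \det (Tmx R) = 1 by rewrite Tmx_mx2 det_mx2; ring.
by rewrite !inE => /or4P[] /eqP ->; rewrite ?det_inv ?detS ?detT ?invr1.
Qed.

Lemma in_H5_det A : in_H5 A -> \det A = 1.
Proof.
elim/in_H5_gen_ind => [|X x hX _ IH]; first exact: det1.
by rewrite det_mulmx IH mulr1 H5_gens_det.
Qed.

Lemma in_H5_unit A : in_H5 A -> A \in unitmx.
Proof. by move=> hA; rewrite unitmxE (in_H5_det hA) unitr1. Qed.

Lemma in_H5V A : in_H5 A -> in_H5 (invmx A).
Proof.
elim/in_H5_gen_ind => [|X x hX hx IH]; first by rewrite invmx1; constructor.
rewrite invmxM ?(in_H5_unit hx) ?(in_H5_unit (in_H5_gen hX)) //; apply: in_H5M IH _.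
move: hX; rewrite !inE => /or4P[] /eqP ->; rewrite ?invmxK; apply: in_H5_gen.
all: by rewrite !inE eqxx ?orbT.
Qed.
End HeckeGroup.

Section CongruenceSubgroup.
Variable R : realType.
Local Notation Zlam := (@Zlam R).
Local Notation in_H5 := (@in_H5 R).
Implicit Types (m k : R) (A B g r : 'M[R]_2).

Lemma mx_congrP m A B : mx_congr m A B <-> A - B \is a mxOver (ideal m).
Proof.
split=> [h|/mxOverP h i j]; first by apply/mxOverP => i j; rewrite !mxE; apply/in_idealP.
by apply/in_idealP; have := h i j; rewrite !mxE.
Qed.

Lemma HP m A : H m A <-> in_H5 A /\ A - 1%:M \is a mxOver (ideal m).
Proof.
have entry i j : (A - 1%:M) i j = A i j - (i == j)%:R by rewrite !mxE.
split=> [[hA h00 h11 h01 h10]|[hA /mxOverP hI]].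
  split=> //; apply/mxOverP => i j; rewrite entry.
  by case: (ord2P i) => ->; case: (ord2P j) => ->; rewrite /= ?subr0; apply/in_idealP.
by split=> //; apply/in_idealP; [move: (hI 0 0)|move: (hI 1 1)|move: (hI 0 1)|move: (hI 1 0)];
  rewrite entry /= ?subr0.
Qed.

Lemma H_in_H5 m A : H m A -> in_H5 A.
Proof. by case. Qed.

Lemma H1 m : H m 1%:M.
Proof. by apply/HP; split; [constructor | rewrite subrr rpred0]. Qed.

Lemma HM m A B : H m A -> H m B -> H m (A *m B).
Proof.
move=> /HP[hA iA] /HP[hB iB]; apply/HP; split; first exact: in_H5M.
have -> : A *m B - 1%:M = (A - 1%:M) *m B + (B - 1%:M).
  by rewrite mulmxBl mul1mx addrA subrK.
by rewrite rpredD // (mxOver_ideal_mulr iA (in_H5_Zlam hB)).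
Qed.

Lemma H_conj m g A : in_H5 g -> H m A -> H m (g *m A *m invmx g).
Proof.
move=> hg /HP[hA iA]; apply/HP; split; first by apply: in_H5M; [apply: in_H5M | apply: in_H5V].
have -> : g *m A *m invmx g - 1%:M = g *m (A - 1%:M) *m invmx g.
  by rewrite mulmxBr mulmxBl mulmx1 mulmxV ?in_H5_unit.
exact: mxOver_ideal_mulr (mxOver_ideal_mull (in_H5_Zlam hg) iA) (in_H5_Zlam (in_H5V hg)).
Qed.

Lemma HV m A : H m A -> H m (invmx A).
Proof.
move=> /HP[hA iA]; apply/HP; split; first exact: in_H5V.
have -> : invmx A - 1%:M = - (invmx A *m (A - 1%:M)).
  by rewrite mulmxBr mulVmx ?in_H5_unit // mulmx1 opprB.
by rewrite rpredN (mxOver_ideal_mull (in_H5_Zlam (in_H5V hA)) iA).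
Qed.

Lemma H_mulS m k A : k \in Zlam -> H (m * k) A -> H m A.
Proof. by move=> hk /HP[hA iA]; apply/HP; split; last exact: mxOver_idealS iA. Qed.

Lemma H_cosetP m r g : in_H5 r -> in_H5 g ->
  H m (invmx r *m g) <-> g - r \is a mxOver (ideal m).
Proof.
move=> hr hg; rewrite HP; have ur := in_H5_unit hr.
have -> : invmx r *m g - 1%:M = invmx r *m (g - r) by rewrite mulmxBr mulVmx.
split=> [[_ i]|i]; last first.
  split; first by apply: in_H5M => //; apply: in_H5V.
  exact: mxOver_ideal_mull (in_H5_Zlam (in_H5V hr)) i.
by rewrite -(mulKVmx ur (g - r)) (mxOver_ideal_mull (in_H5_Zlam hr) i).
Qed.
End CongruenceSubgroup.

Section Index.
Variable R : realType.
Implicit Types (G K L : 'M[R]_2 -> Prop) (a b g : 'M[R]_2).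

Definition mx_group G := [/\ G 1%:M, forall a b, G a -> G b -> G (a *m b),
  forall a, G a -> G (invmx a) & forall a, G a -> a \in unitmx].

Lemma mulmx_invmx_chain a b g : b \in unitmx -> invmx a *m b *m (invmx b *m g) = invmx a *m g.
Proof. by move=> ub; rewrite mulmxA mulmxK. Qed.

Lemma invmx_mulmx_chain a b g : a \in unitmx -> b \in unitmx ->
  invmx (invmx a *m b) *m (invmx a *m g) = invmx b *m g.
Proof. by move=> ua ub; rewrite invmxM ?unitmx_inv // invmxK mulmxA mulmxK. Qed.

Lemma has_index_card (T : finType) G K (r : T -> 'M[R]_2) :
  (forall t, G (r t)) -> (forall g, G g -> exists! t, K (invmx (r t) *m g)) ->
  has_index G K #|T|.
Proof.
move=> hG hU; exists (fun i => r (enum_val i)); split => // g /hU [t [ht u]].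
exists (enum_rank t); split; first by rewrite enum_rankK.
by move=> i /u ->; rewrite enum_valK.
Qed.

Section Cosets.
Variable K : 'M[R]_2 -> Prop.
Hypothesis groupK : mx_group K.

Lemma coset_sym a b : a \in unitmx -> b \in unitmx ->
  K (invmx a *m b) -> K (invmx b *m a).
Proof.
case: groupK => _ _ KV _ ua ub /KV.
by rewrite invmxM ?unitmx_inv // invmxK.
Qed.

Lemma coset_trans a b g : b \in unitmx ->
  K (invmx a *m b) -> K (invmx b *m g) -> K (invmx a *m g).
Proof. by case: groupK => _ KM _ _ ub hab hbg; rewrite -(mulmx_invmx_chain _ _ ub); apply: KM. Qed.

End Cosets.

Section Groups.
Variables (G K : 'M[R]_2 -> Prop).
Hypotheses (groupG : mx_group G) (groupK : mx_group K).

Lemma has_index_leq n1 n2 : has_index G K n1 -> has_index G K n2 -> (n1 <= n2)%N.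
Proof.
case: groupG groupK => _ _ _ GU [K1 KM KV _] [r [hr hu]] [r' [hr' hu']].
have cover g : G g -> exists j, K (invmx (r' j) *m g) by move=> /hu' [j []]; exists j.
pose f i := sval (cid (cover _ (hr i))).
have hf i : K (invmx (r' (f i)) *m r i) := svalP (cid (cover _ (hr i))).
suff f_inj : injective f by have := leq_card f f_inj; rewrite !card_ord.
move=> i i' e; have [j [_ uj]] := hu _ (hr i').
rewrite -(uj i) ?(uj i') ?mulVmx ?GU //.
rewrite -(invmx_mulmx_chain (r i') (GU _ (hr' (f i))) (GU _ (hr i))).
by apply: KM; [apply: KV; apply: hf | rewrite e; apply: hf].
Qed.

Lemma has_index_uniq n1 n2 : has_index G K n1 -> has_index G K n2 -> n1 = n2.
Proof. by move=> h1 h2; apply/eqP; rewrite eqn_leq !has_index_leq. Qed.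

End Groups.

Section Tower.
Variables (G L K : 'M[R]_2 -> Prop).
Hypotheses (groupG : mx_group G) (groupL : mx_group L) (groupK : mx_group K).
Hypotheses (subKL : forall a, K a -> L a) (subLG : forall a, L a -> G a).

Lemma has_index_mul k m : has_index G L k -> has_index L K m -> has_index G K (k * m).
Proof.
case: groupG groupL => _ GM _ GU [_ LM _ LU] [r [hr hu]] [s [hs hv]].
have ur i : r i \in unitmx := GU _ (hr i).
have us j : s j \in unitmx := LU _ (hs j).
have -> : (k * m)%N = #|{: 'I_k * 'I_m}| by rewrite card_prod !card_ord.
apply: (has_index_card (r := fun p => r p.1 *m s p.2)) => [[i j]|g hg].
  by apply: GM => //; apply: subLG.
have e i j : invmx (r i *m s j) *m g = invmx (s j) *m (invmx (r i) *m g).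
  by rewrite invmxM ?mulmxA ?ur ?us.
have [i [hi ui]] := hu g hg; have [j [hj uj]] := hv _ hi.
exists (i, j); split=> [|[i' j'] /=]; first by rewrite e.
rewrite e => hk; have ei : i' = i.
  apply/esym/ui; rewrite -(mulKVmx (us j') (invmx (r i') *m g)).
  by apply: LM => //; apply: subKL.
by rewrite ei in hk *; rewrite (uj _ hk).
Qed.

Lemma has_index_exists N : has_index G K N -> exists k, has_index G L k.
Proof.
case: groupG groupL => _ _ _ GU [L1 _ _ _] [r [hr hu]].
have ur i : r i \in unitmx := GU _ (hr i).
pose eqv i j := `[< L (invmx (r i) *m r j) >].
have eqvP i j : reflect (L (invmx (r i) *m r j)) (eqv i j) := asboolP _.
pose least := [pred i : 'I_N | [forall j, eqv j i ==> (i <= j)%N]].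
exists #|{: {i : 'I_N | least i}}|.
apply: (has_index_card (r := fun t => r (sval t))) => [t|g hg]; first exact: hr.
have [i0 [hi0 _]] := hu g hg.
have i0_refl : eqv i0 i0 by apply/eqvP; rewrite mulVmx.
have [i /eqvP hi i_min] := @arg_minnP _ i0 (eqv^~ i0) val i0_refl.
have least_i : least i.
  apply/forallP => j; apply/implyP => /eqvP hj; apply: i_min.
  by apply/eqvP; apply: (coset_trans groupL (ur i) hj hi).
have cover : L (invmx (r i) *m g) by apply: (coset_trans groupL (ur i0) hi (subKL hi0)).
exists (exist _ i least_i); split=> // [[i' least_i']] /= cover'.
have hii' : L (invmx (r i) *m r i').
  exact: (coset_trans groupL (GU _ hg) cover (coset_sym groupL (ur i') (GU _ hg) cover')).
apply/val_inj/val_inj/eqP; rewrite /= eqn_leq.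
move/forallP: least_i => /(_ i') /implyP -> /=; last by apply/eqvP; apply: coset_sym.
by move/forallP: least_i' => /(_ i) /implyP ->; last apply/eqvP.
Qed.

Lemma has_index_mulr_iff k m : has_index L K m -> (0 < m)%N ->
  has_index G L k <-> has_index G K (k * m).
Proof.
move=> hm m_gt0; split=> [hk|hkm]; first exact: has_index_mul.
have [k' hk'] := has_index_exists hkm.
have := has_index_uniq groupG groupK (has_index_mul hk' hm) hkm.
by move/eqP; rewrite eqn_pmul2r // => /eqP <-.
Qed.
End Tower.
End Index.

Section Residues.
Variable R : realType.
Local Notation Zlam := (@Zlam R).
Local Notation res2R := (@res2R R).
Implicit Types (m k : R) (A B X g : 'M[R]_2).

Lemma pow2_neq0 n : 2%:R ^+ n != 0 :> R.
Proof. by rewrite expf_neq0 // pnatr_eq0. Qed.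

Lemma pow2_Zlam n : 2%:R ^+ n \in Zlam.
Proof. by Zlam_tac. Qed.

Lemma mxOver_ideal_pow2S n p q (A : 'M[R]_(p, q)) :
  A \is a mxOver (ideal (2%:R ^+ n.+1)) -> A \is a mxOver (ideal (2%:R ^+ n)).
Proof. by rewrite exprSr; apply: mxOver_idealS; Zlam_tac. Qed.

(* Residues modulo 2 of the entries [0 0], [0 1], [1 0] of a matrix of even trace; its
   entry [1 1] is then congruent to the entry [0 0], as [-1 = 1] modulo 2. *)
Definition cls := (res2 * res2 * res2)%type.

Definition cls_mx (c : cls) : 'M[R]_2 :=
  mx2 (res2R c.1.1) (res2R c.1.2) (res2R c.2) (res2R c.1.1).

Lemma cls_mx_inj c c' : cls_mx c - cls_mx c' \is a mxOver (ideal 2) -> c = c'.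
Proof.
rewrite mx2_sub mxOver_mx2 => /and4P[/res2R_inj h1 /res2R_inj h2 /res2R_inj h3 _].
by case: c c' h1 h2 h3 => [[? ?] ?] [[? ?] ?] /= -> -> ->.
Qed.

Lemma cls_residue X : X \is a mxOver Zlam -> X 0 0 + X 1 1 \in ideal 2 ->
  exists c, X - cls_mx c \is a mxOver (ideal 2).
Proof.
move=> /mxOverP hX htr.
have [e1 h1] := res2R_exists (hX 0 0); have [e2 h2] := res2R_exists (hX 0 1).
have [e3 h3] := res2R_exists (hX 1 0).
exists (e1, e2, e3); rewrite [X]mx2_eta mx2_sub mxOver_mx2 h1 h2 h3 /=.
(* [X 1 1 = tr X - X 0 0] and [- x = x] modulo 2 *)
have -> : X 1 1 - res2R e1 = (X 0 0 + X 1 1) - (X 0 0 - res2R e1) - 2 * res2R e1 by ring.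
have two_e1 : 2 * res2R e1 \in ideal 2 by apply: ideal_gen; apply: Zlam_res2R.
by rewrite rpredB // rpredB.
Qed.

Lemma H_pow2_cls n g : H (2%:R ^+ n.+1) g ->
  exists c, g - (1%:M + 2%:R ^+ n.+1 *: cls_mx c) \is a mxOver (ideal (2%:R ^+ n.+2)).
Proof.
move=> /HP[hg /(mxOver_idealP _ (pow2_neq0 _)) [X hX eX]].
set q := 2%:R ^+ n.+1 in eX *; pose t : R := 2%:R ^+ n.
have hdet := in_H5_det hg; rewrite -(subrK 1%:M g) eX addrC det_mx2_1addZ in hdet.
have htr : X 0 0 + X 1 1 \in ideal 2.
  apply/idealP; exists (- (t * \det X)).
    by have /mxOverP hXij := hX; rewrite [X]mx2_eta det_mx2; Zlam_tac.
  apply: (mulfI (pow2_neq0 n.+1)); rewrite -/q -trace_mx2.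
  transitivity (1 + q * \tr X + q ^+ 2 * \det X - 1 - q ^+ 2 * \det X); first ring.
  by rewrite hdet /q (exprS _ n) -/t; ring.
have [c hc] := cls_residue hX htr; exists c.
have -> : g - (1%:M + q *: cls_mx c) = q *: (X - cls_mx c).
  by rewrite scalerBr -eX opprD addrA.
by rewrite exprSr mxOver_ideal_scalel.
Qed.
End Residues.

Arguments cls_mx {R}.

Section Lifting.
Variable R : realType.
Local Notation Zlam := (@Zlam R).
Implicit Types (X Y g : 'M[R]_2).

Definition residue_of_H n X := exists2 g, H (2%:R ^+ n) g &
  g - (1%:M + 2%:R ^+ n *: X) \is a mxOver (ideal (2%:R ^+ n.+1)).

Lemma residue_of_H0 n : residue_of_H n 0.
Proof. by exists 1%:M; [exact: H1 | rewrite scaler0 addr0 subrr rpred0]. Qed.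

Lemma residue_of_H_congr n X Y : residue_of_H n X ->
  X - Y \is a mxOver (ideal 2) -> residue_of_H n Y.
Proof.
move=> [g hg hgX] hXY; exists g; first exact: hg.
apply: (mxOver_ideal_trans hgX).
by rewrite subr_1addZ exprSr mxOver_ideal_scalel.
Qed.

Lemma residue_of_H_Zlam n X : residue_of_H n X -> X \is a mxOver Zlam.
Proof.
move=> [g /HP[_ hg1] hgX]; set q := 2%:R ^+ n in hg1 hgX.
have hqX : q *: X \is a mxOver (ideal (q * 1)).
  have -> : q *: X = (g - 1%:M) - (g - (1%:M + q *: X)).
    by rewrite opprB addrC addrA subrK addrC addKr.
  by rewrite mulr1 rpredB // mxOver_ideal_pow2S.
by apply: (mxOver_ideal_Zlam (rpred1 _)); apply: mxOver_ideal_scaleK hqX; apply: pow2_neq0.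
Qed.

Lemma residue_of_HD n X Y : (0 < n)%N ->
  residue_of_H n X -> residue_of_H n Y -> residue_of_H n (X + Y).
Proof.
move=> n_gt0 resX resY; have hX := residue_of_H_Zlam resX; have hY := residue_of_H_Zlam resY.
case: n n_gt0 resX resY => [//|n] _ [g hg hgX] [h hh hhY]; exists (g *m h); first exact: HM.
set q := 2%:R ^+ n.+1 in hgX hhY *.
have Zlam_1q (Z : 'M[R]_2) : Z \is a mxOver Zlam -> 1%:M + q *: Z \is a mxOver Zlam.
  by move=> hZ; rewrite rpredD ?mxOverZ ?pow2_Zlam //; apply: mxOver_scalar; Zlam_tac.
have := mxOver_ideal_congrM (Zlam_1q _ hX) (in_H5_Zlam (H_in_H5 hh)) hgX hhY.
rewrite mulmx_1addZ -scalerDr => /mxOver_ideal_trans; apply.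
rewrite addrAC subrr add0r.
have -> : q * q = 2%:R ^+ n.+2 * 2%:R ^+ n by rewrite /q -!exprD addnS addSn.
by rewrite -scalerA mxOver_ideal_scale // mxOverZ ?pow2_Zlam // mxOverM.
Qed.

Lemma residue_of_H_conj n g X :
  in_H5 g -> residue_of_H n X -> residue_of_H n (g *m X *m invmx g).
Proof.
move=> hg [h hh hhX]; exists (g *m h *m invmx g); first exact: H_conj.
have -> : 1%:M + 2%:R ^+ n *: (g *m X *m invmx g) = g *m (1%:M + 2%:R ^+ n *: X) *m invmx g.
  by rewrite mulmxDr mulmxDl mulmx1 mulmxV ?in_H5_unit // -scalemxAr -scalemxAl.
rewrite -mulmxBl -mulmxBr.
exact: mxOver_ideal_mulr (mxOver_ideal_mull (in_H5_Zlam hg) hhX) (in_H5_Zlam (in_H5V hg)).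
Qed.

Lemma residue_of_H_sqr n X : (1 < n)%N -> residue_of_H n X -> residue_of_H n.+1 X.
Proof.
case: n => [|[|k]] // _ [r hr hrX]; set q := 2%:R ^+ k.+2 in hrX *.
have /HP[hr5 /(mxOver_idealP _ (pow2_neq0 _ _)) [Z hZ eZ]] := hr.
have rE : r = 1%:M + q *: Z by rewrite -eZ addrC subrK.
have hZX : Z - X \is a mxOver (ideal 2).
  apply: (mxOver_ideal_scaleK (pow2_neq0 _ k.+2)).
  by rewrite -exprSr -/q -subr_1addZ -rE.
have sqr : r *m r - (1%:M + 2%:R ^+ k.+3 *: Z) \is a mxOver (ideal (2%:R ^+ k.+4)).
  have q2 : 2%:R ^+ k.+3 = q + q by rewrite exprSr -/q mulrDr mulr1.
  rewrite rE mulmx_1addZ q2 scalerDl addrAC subrr add0r.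
  have -> : q * q = 2%:R ^+ k.+4 * 2%:R ^+ k by rewrite /q -!exprD !addnS addSn.
  by rewrite -scalerA mxOver_ideal_scale // mxOverZ ?pow2_Zlam // mxOverM.
exists (r *m r).
  apply/HP; split; first exact: in_H5M.
  apply: (mxOver_ideal_trans (mxOver_ideal_pow2S sqr)).
  by rewrite addrAC subrr add0r mxOver_ideal_scale.
apply: (mxOver_ideal_trans sqr).
by rewrite subr_1addZ [2%:R ^+ k.+4]exprSr mxOver_ideal_scalel.
Qed.

Lemma residue_of_H_scalen n k X : (0 < n)%N ->
  residue_of_H n X -> residue_of_H n (k%:R *: X).
Proof.
move=> n_gt0 hres; elim: k => [|k IH]; first by rewrite scale0r; apply: residue_of_H0.
by rewrite -natr1 scalerDl scale1r; apply: residue_of_HD.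
Qed.
End Lifting.

Section Generation.
Variable R : realType.
Local Notation lam := (lam R).
Local Notation Zlam := (@Zlam R).
Local Notation residue := (@residue_of_H R 2).

Tactic Notation "ideal_witness" constr(y) :=
  apply/idealP; exists y; [Zlam_tac | ring: (lam_sqr R)].

Lemma residue_S_conj b : b \in Zlam -> residue (mx2 0 b 0 0) -> residue (mx2 0 0 b 0).
Proof.
move=> hb /(residue_of_H_conj (in_H5_Smx R)).
rewrite invmx_Smx Smx_mx2 !mx2_mul => /residue_of_H_congr; apply.
rewrite mx2_sub mxOver_mx2; apply/and4P.
by split; [ideal_witness (0 : R) | ideal_witness (0 : R) | ideal_witness (- b)
  | ideal_witness (0 : R)].
Qed.

Lemma residue_T_conj b : b \in Zlam ->
  residue (mx2 0 0 b 0) -> residue (mx2 (b * lam) (b * (lam + 1)) b (b * lam)).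
Proof.
move=> hb /(residue_of_H_conj (in_H5_Tmx R)).
rewrite invmx_Tmx Tmx_mx2 !mx2_mul => /residue_of_H_congr; apply.
rewrite mx2_sub mxOver_mx2; apply/and4P.
by split; [ideal_witness (0 : R) | ideal_witness (- b * (lam + 1)) | ideal_witness (0 : R)
  | ideal_witness (- b * lam)].
Qed.

Lemma residue_T4 : residue (mx2 0 lam 0 0).
Proof.
have T4 : Tmx R *m Tmx R *m Tmx R *m Tmx R = mx2 1 (2%:R ^+ 2 * lam) 0 1.
  by rewrite Tmx_mx2 !mx2_mul; congr mx2; ring.
exists (Tmx R *m Tmx R *m Tmx R *m Tmx R).
  have hT := in_H5_Tmx R.
  apply/HP; split; first by do 3!apply: in_H5M => //.
  rewrite T4 mx2_one mx2_sub mxOver_mx2; apply/and4P.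
  by split; [ideal_witness (0 : R) | ideal_witness lam | ideal_witness (0 : R)
    | ideal_witness (0 : R)].
rewrite T4 mx2_one mx2_scale mx2_add mx2_sub mxOver_mx2.
by apply/and4P; split; ideal_witness (0 : R).
Qed.

Lemma residue_res2R (M : 'M[R]_2) e :
  residue M -> residue (lam *: M) -> residue (res2R e *: M).
Proof.
move=> h1 hlam; rewrite /res2R scalerDl -scalerA.
by apply: residue_of_HD => //; apply: residue_of_H_scalen.
Qed.

Section FromSigma.
Hypothesis residue_e01 : residue (mx2 0 1 0 0).

Let residue_e10 : residue (mx2 0 0 1 0) := residue_S_conj (rpred1 _) residue_e01.
Let residue_lam_e10 : residue (mx2 0 0 lam 0) := residue_S_conj (Zlam_lam R) residue_T4.

Lemma residue_lam_one : residue (mx2 lam 0 0 lam).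
Proof.
(* [T e21 T^-1 + lam e12 + e12 + e21 = lam] modulo 2 *)
have := residue_T_conj (rpred1 _) residue_e10.
move=> /(residue_of_HD (n := 2) isT)/(_ residue_T4).
move=> /(residue_of_HD (n := 2) isT)/(_ residue_e01).
move=> /(residue_of_HD (n := 2) isT)/(_ residue_e10).
rewrite !mx2_add => /residue_of_H_congr; apply; rewrite mx2_sub mxOver_mx2; apply/and4P.
by split; [ideal_witness (0 : R) | ideal_witness (lam + 1) | ideal_witness (1 : R)
  | ideal_witness (0 : R)].
Qed.

Lemma residue_one : residue (mx2 1 0 0 1).
Proof.
(* [T (lam e21) T^-1 + lam + e12 + lam e21 = 1] modulo 2 *)
have := residue_T_conj (Zlam_lam R) residue_lam_e10.
move=> /(residue_of_HD (n := 2) isT)/(_ residue_lam_one).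
move=> /(residue_of_HD (n := 2) isT)/(_ residue_e01).
move=> /(residue_of_HD (n := 2) isT)/(_ residue_lam_e10).
rewrite !mx2_add => /residue_of_H_congr; apply; rewrite mx2_sub mxOver_mx2; apply/and4P.
by split; [ideal_witness lam | ideal_witness (lam + 1) | ideal_witness lam | ideal_witness lam].
Qed.

Lemma residue_cls c : residue (cls_mx c).
Proof.
have lamE a b d e : lam *: mx2 a b d e = mx2 (lam * a) (lam * b) (lam * d) (lam * e).
  exact: mx2_scale.
have hI := residue_res2R c.1.1 residue_one.
have h01 := residue_res2R c.1.2 residue_e01.
have h10 := residue_res2R c.2 residue_e10.
rewrite !lamE !mulr0 !mulr1 in hI h01 h10.
have -> : cls_mx c = res2R c.1.1 *: mx2 1 0 0 1 + res2R c.1.2 *: mx2 0 1 0 0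
    + res2R c.2 *: mx2 0 0 1 0 :> 'M[R]_2.
  by rewrite /cls_mx !mx2_scale !mx2_add; congr mx2; ring.
apply: (residue_of_HD (n := 2) isT); first apply: (residue_of_HD (n := 2) isT).
- exact: hI residue_lam_one.
- exact: h01 residue_T4.
- exact: h10 residue_lam_e10.
Qed.
End FromSigma.
End Generation.

Section IndexCount.
Variable R : realType.

Lemma mx_group_H5 : mx_group (@in_H5 R).
Proof.
by split=> [|a b|a|a]; [constructor | apply: in_H5M | apply: in_H5V | apply: in_H5_unit].
Qed.

Lemma mx_group_H (m : R) : mx_group (H m).
Proof.
by split=> [|a b|a|a]; [apply: H1 | apply: HM | apply: HV | move/H_in_H5; apply: in_H5_unit].
Qed.

Lemma has_index_H_pow2S n : (forall c, residue_of_H n.+1 (@cls_mx R c)) ->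
  @has_index R (H (2%:R ^+ n.+1)) (H (2%:R ^+ n.+2)) #|{: cls}|.
Proof.
move=> res; pose r c := sval (cid2 (res c)).
have [hr hrc] : (forall c, H (2%:R ^+ n.+1) (r c)) /\
    forall c, r c - (1%:M + 2%:R ^+ n.+1 *: cls_mx c) \is a mxOver (ideal (2%:R ^+ n.+2)).
  by split=> c; case: (svalP (cid2 (res c))).
apply: (has_index_card (r := r)) => // g hg.
have [c hgc] := H_pow2_cls hg.
have cosetP c' : H (2%:R ^+ n.+2) (invmx (r c') *m g) <->
    g - r c' \is a mxOver (ideal (2%:R ^+ n.+2)).
  exact: H_cosetP (H_in_H5 (hr c')) (H_in_H5 hg).
exists c; split=> [|c' /cosetP hc'].
  apply/cosetP; apply: (mxOver_ideal_trans hgc).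
  by rewrite -opprB rpredN.
have hcc' : (1%:M + 2%:R ^+ n.+1 *: @cls_mx R c) - (1%:M + 2%:R ^+ n.+1 *: cls_mx c')
    \is a mxOver (ideal (2%:R ^+ n.+2)).
  apply: (mxOver_ideal_trans (B := g)); first by rewrite -opprB rpredN.
  exact: mxOver_ideal_trans hc' (hrc c').
rewrite subr_1addZ [2%:R ^+ n.+2]exprSr in hcc'.
exact/cls_mx_inj/(mxOver_ideal_scaleK (pow2_neq0 _ n.+1) hcc').
Qed.
End IndexCount.

Lemma card_cls : #|{: cls}| = (2 ^ 6)%N.
Proof. by rewrite !card_prod card_bool. Qed.

Section Main.
Variable R : realType.

Lemma residue_e01_of_sigma (s : 'M[R]_2) : H 4%:R s ->
  mx_congr 8%:R s (\matrix_(i < 2, j < 2) (if i == j then 1 else if i == 0 then 4%:R else 0)) ->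
  residue_of_H 2 (mx2 0 1 0 0 : 'M[R]_2).
Proof.
move=> hs /mx_congrP hc; exists s; first by rewrite -natrX.
suff -> : 1%:M + 2%:R ^+ 2 *: mx2 0 1 0 0 = \matrix_(i < 2, j < 2)
    (if i == j then 1 else if i == 0 then 4%:R else 0) :> 'M[R]_2.
  by rewrite -natrX.
rewrite -natrX mx2_one mx2_scale mx2_add; apply/matrixP => i j; rewrite !mxE.
by case: (ord2P i) => ->; case: (ord2P j) => ->; rewrite /= ?mulr0 ?mulr1 ?addr0 ?add0r.
Qed.

Hypothesis residue_e01 : residue_of_H 2 (mx2 0 1 0 0 : 'M[R]_2).

Lemma residue_of_H_cls n c : (2 <= n)%N -> residue_of_H n (@cls_mx R c).
Proof.
elim: n => [|n IH] //; rewrite leq_eqVlt => /orP[/eqP[<-]|hn].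
  exact: residue_cls residue_e01 c.
exact: residue_of_H_sqr hn (IH hn).
Qed.

Lemma has_index_H_pow2 n : (2 <= n)%N ->
  @has_index R (H (2%:R ^+ n)) (H (2%:R ^+ n.+1)) (2 ^ 6)%N.
Proof.
case: n => // n hn; rewrite -card_cls; apply: has_index_H_pow2S => c.
exact: residue_of_H_cls.
Qed.

Lemma has_index_H5_pow2S n k : (2 <= n)%N ->
  @has_index R (@in_H5 R) (H (2%:R ^+ n)) k <->
  @has_index R (@in_H5 R) (H (2%:R ^+ n.+1)) (k * 2 ^ 6)%N.
Proof.
move=> hn; apply: (has_index_mulr_iff (mx_group_H5 R) (mx_group_H _) (mx_group_H _)).
- by move=> a; rewrite exprSr => ha; apply: (H_mulS _ ha); apply: rpred_nat.
- by move=> a /H_in_H5.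
- exact: has_index_H_pow2.
- by rewrite expn_gt0.
Qed.
End Main.

Theorem corollary4p3 (R : realType) :
  (exists sigma : 'M[R]_2, H 4%:R sigma /\
     mx_congr 8%:R sigma (\matrix_(i < 2, j < 2)
        (if i == j then 1 else if i == 0 then 4%:R else 0))) ->
  (forall n : nat, (2 <= n)%N ->
     @has_index R (H (2%:R ^+ n)) (H (2%:R ^+ n.+1)) (2 ^ 6)%N) /\
  (forall n : nat, (2 <= n)%N -> forall k : nat,
     @has_index R (@in_H5 R) (H 4%:R) k <->
     @has_index R (@in_H5 R) (H (2%:R ^+ n)) (2 ^ (6 * (n - 2)) * k)%N).
Proof.
move=> [s [hs hc]]; have e01 := residue_e01_of_sigma hs hc.
split=> [n|]; first exact: (has_index_H_pow2 e01).
elim=> [|n IH] // hn k; have [->|hn1] : n = 1%N \/ (2 <= n)%N by lia.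
  by rewrite mul1n -natrX.
rewrite IH // (has_index_H5_pow2S e01 _ hn1) subSn // mulnS expnD.
by rewrite mulnC mulnA.
Qed.
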